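(* Let $T$ be a bounded saturation theory, let $G$ and $E$ be finite sets of predicates of $T$, and let $G' \subseteq G$. Let $N := D_T(G\cup\widetilde{E})$. For $0 \le i \le N$, let $W_S^i$ be the set $W$ of the symbolic procedure $\mathit{SDP}_T(G,E)$ after $i$ iterations of its saturation loop (step (2)), and let $W^i$ be the set $W$ of the saturation procedure run on input $G'\cup\widetilde{E}$ after $i$ iterations of its loop. Then for every $0 \le i \le N$: (1) $W^i \subseteq W_S^i$; and (2) for every predicate $g \in W_S^i$, $[\tau_{(g,i)}]_{G'} = {\tt true}$ if and only if $g \in W^i$.
   Context: A predicate is an atomic formula or its negation; a finite set of predicates is identified with the conjunction of its elements. The theory $T$ comes with inference rules; a rule instance is written $g \mathrel{:-} g_1,\dots,g_k$, meaning that $g$ (a predicate, or the contradiction symbol $\bot$) can be derived in one step from predicates $g_1,\dots,g_k$. For a set $H$ of predicates, $\widetilde{H} := \{\neg h : h \in H\}$. Saturation procedure $\mathrm{Sat}_N(H)$ (for a finite set $H$ of predicates and integer $N\ge 0$): (1) $W := H$. (2) Repeat $N$ times: set $W' := W$; for every predicate $g \notin W'$ for which there is a rule instance $g \mathrel{:-} g_1,\dots,g_k$ with all $g_j \in W'$, add $g$ to $W$. (3) If there is a rule instance $\bot \mathrel{:-} g_1,\dots,g_k$ with all $g_j\in W$, return UNSATISFIABLE, otherwise SATISFIABLE. $T$ is a bounded saturation theory if there is a function $d_T$ assigning to each finite set $H$ of predicates a natural number $d_T(H)$ such that for every $N \ge d_T(H)$, $\mathrm{Sat}_N(H)$ returns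 UNSATISFIABLE iff $H$ is unsatisfiable in $T$. For a finite set $S$, $D_T(S) := \max\{d_T(S') : S' \subseteq S\}$. Symbolic decision procedure $\mathit{SDP}_T(G,E)$: introduce a Boolean variable $b_g$ for each $g\in G$ (the set $B_G$). Let $N := D_T(G\cup\widetilde{E})$. (1) $W := G \cup \widetilde{E}$; set $\tau_{(g,0)} := b_g$ for $g\in G$ and $\tau_{(\neg e_i,0)} := {\tt true}$ for $e_i\in E$. (2) For $i = 1,\dots,N$: $W' := W$; set $S(g) := \emptyset$ for every predicate $g$; for every $g\in W'$ add $\tau_{(g,i-1)}$ to $S(g)$; for every predicate $g$ and every rule instance $g \mathrel{:-} g_1,\dots,g_k$ with all $g_m \in W'$, add the conjunction $\bigwedge_{m=1}^k \tau_{(g_m,i-1)}$ to $S(g)$ and add $g$ to $W$; then for each $g \in W$ set $\tau_{(g,i)} := \bigvee_{d\in S(g)} d$ and $\tau_{(g,\top)} := \tau_{(g,i)}$. (3) Let $S(e)$ be the set of conjunctions $\bigwedge_{m=1}^k \tau_{(g_m,\top)}$ over all rule instances $\bot \mathrel{:-} g_1,\dots,g_k$ with $\{g_1,\dots,g_k\}\subseteq W$, and set $\tau_e := \bigvee_{d\in S(e)} d$. (4) Return $\tau_e$. For a Boolean expression $\tau$ with leaves in $B_G$ (or constants) and $G'\subseteq G$, $[\tau]_{G'}$ is the truth value of $\tau$ obtained by replacing each leaf $b_g$ by ${\tt true}$ if $g\in G'$ and ${\tt false}$ otherwise, with $\wedge,\vee$ interpreted as usual. *)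

From HB Require Import structures.
From mathcomp Require Import all_boot.
From mathcomp Require Import finmap.

Set Implicit Arguments.
Unset Strict Implicit.
Unset Printing Implicit Defensive.

Local Open Scope fset_scope.

(* A theory T: a type of predicates (atomic formulas or their negations),
   a negation operation on predicates, rule instances
     g :- g_1, ..., g_k   (rule (Some g) [:: g_1; ...; g_k])
     bot :- g_1, ..., g_k (rule None [:: g_1; ...; g_k]),
   and the (abstract) semantic notion of unsatisfiability of a finite set of
   predicates (identified with their conjunction). *)
Record theory := Theory {
  tpred : choiceType;
  tneg : tpred -> tpred;
  trule : option tpred -> seq tpred -> Prop;
  tunsat : {fset tpred} -> Prop
}.

Section Defs.
Variable T : theory.
Local Notation P := (tpred T).

Definition tilde (H : {fset P}) : {fset P} := [fset tneg h | h in H].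

Definition premises_in (W : P -> Prop) (gs : seq P) : Prop :=
  forall x, x \in gs -> W x.

Fixpoint satW (H : {fset P}) (i : nat) : P -> Prop :=
  match i with
  | 0 => fun g => is_true (g \in H)
  | i'.+1 => fun g => satW H i' g \/
      exists gs, trule (Some g) gs /\ premises_in (satW H i') gs
  end.

Definition Sat_unsat (N : nat) (H : {fset P}) : Prop :=
  exists gs, trule None gs /\ premises_in (satW H N) gs.

Definition bounded_saturation (d : {fset P} -> nat) : Prop :=
  forall (H : {fset P}) (N : nat), d H <= N -> (Sat_unsat N H <-> tunsat H).

Definition DT (d : {fset P} -> nat) (S : {fset P}) : nat :=
  \max_(S' <- fpowerset S) d S'.

End Defs.

(* Boolean expressions with leaves b_g (variables indexed by predicates) or
   constants; conjunctions are finite, disjunctions are indexed by an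
   arbitrary type (the set S(g) of disjuncts). *)
Inductive bexp (V : Type) : Type :=
| BVar : V -> bexp V
| BConst : bool -> bexp V
| BAnd : seq (bexp V) -> bexp V
| BOr : forall I : Type, (I -> bexp V) -> bexp V.

(* [tau]_{G'}: leaf b_g is true iff g in G'. *)
Fixpoint beval (V : Type) (v : V -> Prop) (t : bexp V) : Prop :=
  match t with
  | BVar x => v x
  | BConst b => b = true
  | BAnd s => (fix all_ev (s : seq (bexp V)) : Prop :=
                 match s with
                 | [::] => True
                 | t :: s' => beval v t /\ all_ev s'
                 end) s
  | BOr _ f => exists i, beval v (f i)
  end.

Section SDP.
Variable T : theory.
Local Notation P := (tpred T).
Variables G E : {fset P}.

(* The disjuncts of S(g) at iteration i are indexed by
   None (the term tau_(g,i-1), present iff g in W') or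
   Some gs (a rule instance g :- gs with all premises in W'). *)
Definition sdp_index (W' : P -> Prop) (g : P) : Type :=
  {x : option (seq P) |
     match x with
     | None => W' g
     | Some gs => trule (Some g) gs /\ premises_in W' gs
     end}.

Fixpoint sdp_state (i : nat) : (P -> Prop) * (P -> bexp P) :=
  match i with
  | 0 => (fun g => is_true (g \in G `|` tilde E),
          fun g => if g \in tilde E then BConst P true
                   else if g \in G then BVar g else BConst P false)
  | i'.+1 =>
      let W' := (sdp_state i').1 in
      let tau' := (sdp_state i').2 in
      (fun g => W' g \/ exists gs, trule (Some g) gs /\ premises_in W' gs,
       fun g => BOr (fun x : sdp_index W' g =>
                  match sval x with
                  | None => tau' g
                  | Some gs => BAnd (map tau' gs)
                  end))
  end.

Definition sdpW (i : nat) : P -> Prop := (sdp_state i).1.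
Definition sdp_tau (i : nat) (g : P) : bexp P := (sdp_state i).2 g.

End SDP.

From HB Require Import structures.
From mathcomp Require Import all_boot.
From mathcomp Require Import finmap.
Local Open Scope fset_scope.

(* Each disjunct of S(g) at step i mirrors one way the concrete run can put g
   into W^i (g was already there, or a rule fires from premises in W^i), and
   evaluating tau under G' decides exactly whether that way is available;
   hence [tau_(g,i)]_G' holds iff g is in W^i, for every predicate g, not
   only those in W_S^i. *)

Lemma beval_BAnd_map (P : eqType) (v : P -> Prop) (tau : P -> bexp P) (gs : seq P) :
  beval v (BAnd (map tau gs)) <-> (forall h, h \in gs -> beval v (tau h)).
Proof.
elim: gs => [|a gs IH] /=; first by split.
change (beval v (tau a) /\ beval v (BAnd (map tau gs)) <->
  (forall h, h \in a :: gs -> beval v (tau h))).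
rewrite IH; split=> [[Ha Hgs] h|Hags].
- by rewrite in_cons => /predU1P [->|/Hgs].
- by split=> [|h hgs]; apply: Hags; rewrite in_cons ?eqxx ?hgs ?orbT.
Qed.

Section SymbolicSaturation.
Variable T : theory.
Variables G E G' : {fset tpred T}.
Hypothesis sub_G'G : G' `<=` G.

Local Notation W i := (satW (G' `|` tilde E) i).
Local Notation WS i := (sdpW G E i).
Local Notation eval t := (beval (fun x => x \in G') t).

Lemma premises_in_sub {W1 W2 : tpred T -> Prop} {gs : seq (tpred T)} :
  (forall g, W1 g -> W2 g) -> premises_in W1 gs -> premises_in W2 gs.
Proof. by move=> W12 W1gs x /W1gs /W12. Qed.

Lemma satW_sub_sdpW i g : W i g -> WS i g.
Proof.
elim: i g => [|i IH] g /=.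
- by rewrite /sdpW /= !inE => /orP [/(fsubsetP sub_G'G)->|->]; rewrite ?orbT.
- case=> [/IH Wg|[gs [rule_gs Wgs]]]; [left | right; exists gs] => //.
  by split=> //; apply: premises_in_sub Wgs.
Qed.

Lemma eval_sdp_tau0 g : eval (sdp_tau G E 0 g) <-> W 0 g.
Proof.
rewrite /sdp_tau /= !inE; case: (boolP (g \in tilde E)) => gE /=; first by rewrite orbT.
rewrite orbF; case: (boolP (g \in G)) => gG //=.
by split=> // /(fsubsetP sub_G'G); rewrite (negPf gG).
Qed.

Lemma eval_sdp_tau i g : eval (sdp_tau G E i g) <-> W i g.
Proof.
elim: i g => [|i IH] g; first exact: eval_sdp_tau0.
have eval_premises gs :
    eval (BAnd (map (sdp_tau G E i) gs)) <-> premises_in (W i) gs.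
  rewrite beval_BAnd_map /premises_in.
  by split=> Hgs x /Hgs /IH.
rewrite /sdp_tau /=; split.
- case=> [[[gs|] /= index_gs]].
  + by case: index_gs => rule_gs _ /eval_premises Wgs; right; exists gs.
  + by move/IH; left.
- case=> [Wg | [gs [rule_gs Wgs]]].
  + by exists (exist _ None (satW_sub_sdpW _ _ Wg)); apply/IH.
  + have WSgs := premises_in_sub (satW_sub_sdpW i) Wgs.
    by exists (exist _ (Some gs) (conj rule_gs WSgs)); apply/eval_premises.
Qed.

End SymbolicSaturation.

Theorem lemma3p4 (T : theory) (d : {fset tpred T} -> nat)
  (hT : bounded_saturation d) (G E G' : {fset tpred T}) (hG' : G' `<=` G) :
  let N := DT d (G `|` tilde E) in
  forall i : nat, i <= N ->
    (forall g, satW (G' `|` tilde E) i g -> sdpW G E i g) /\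
    (forall g, sdpW G E i g ->
       (beval (fun x => x \in G') (sdp_tau G E i g) <-> satW (G' `|` tilde E) i g)).
Proof.
move=> N i _; split=> [g | g _].
- exact: satW_sub_sdpW.
- exact: eval_sdp_tau.
Qed.
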